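(* Let $M$ be a monoid with $M\neq\{1_M\}$ and let $T=(-)\times M$ be the writer monad, applied pointwise as an indexed monad on $\mathrm{Fam}(\mathbf{Set})$, with unit $\eta_A(a)=(a,1_M)$. Take $\Gamma=1$, $A=1$ and the family $B$ over $\Gamma.TA\cong M$ given by $B(m)=1$ if $m=1_M$ and $B(m)=\emptyset$ otherwise. Then the set $\prod_{(c,a)\in\Gamma.A}B(c,(a,1_M))\times M$ is nonempty while $\prod_{(c,t)\in\Gamma.TA}B(c,t)\times M$ is empty. Consequently there is no map $\mathrm{Fam}(\mathbf{Set})(\Gamma.A)(1,TB\{\mathbf{p}_\Gamma(\eta_A)\})\to\mathrm{Fam}(\mathbf{Set})(\Gamma.TA)(1,TB)$, so the Eilenberg–Moore dCBPV$^-$ model of $T$ on $\mathrm{Fam}(\mathbf{Set})$ admits no dependent Kleisli extensions.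
   Context: $\mathrm{Fam}(\mathbf{Set}):\mathbf{Set}^{op}\to\mathbf{Cat}$ sends a set $X$ to the category of $X$-indexed families of sets $(A(x))_{x\in X}$ with families of functions as morphisms, reindexing by precomposition. Its comprehension is $X.A=\{(x,a)\mid x\in X, a\in A(x)\}$ with first projection, and global elements $1\to A$ in the fibre over $X$ are dependent functions $\prod_{x\in X}A(x)$. For a morphism $g:A\to A'$ in a fibre over $\Gamma$, $\mathbf{p}_\Gamma(g):\Gamma.A\to\Gamma.A'$ is $(c,a)\mapsto(c,g_c(a))$. A pointwise monad $T$ acts by $(TA)(x)=T(A(x))$. Dependent Kleisli extensions (for empty trailing context) are maps assigning to each global section of $UFB\{\mathbf{p}_\Gamma(\eta_A)\}$ over $\Gamma.A$ a global section of $UFB$ over $\Gamma.UFA$, for $B$ over $\Gamma.UFA$, subject to unitality and composition laws; here $UF=T$. *)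

(* sets are Rocq Types; Fam(Set) over X is X -> Type. *)
Set Implicit Arguments.

Definition Fam (X : Type) : Type := X -> Type.

Definition compr (X : Type) (A : Fam X) : Type := {x : X & A x}.

Definition reindex (X Y : Type) (f : Y -> X) (A : Fam X) : Fam Y :=
  fun y => A (f y).

(* global elements 1 -> A in the fibre over X: dependent functions *)
Definition Sec (X : Type) (A : Fam X) : Type := forall x : X, A x.

Definition pmap (G : Type) (A A' : Fam G) (g : forall c, A c -> A' c)
  : compr A -> compr A' :=
  fun p => existT A' (projT1 p) (g (projT1 p) (projT2 p)).

Definition Tfam (M : Type) (X : Type) (A : Fam X) : Fam X :=
  fun x => (A x * M)%type.

Definition eta (M : Type) (one : M) (X : Type) (A : Fam X)
  : forall x, A x -> Tfam M A x :=
  fun x a => (a, one).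

(* The underlying operation of a dependent Kleisli extension (empty trailing
   context): for every Gamma, A over Gamma, B over Gamma.TA, a map
   Sec(T B{p(eta_A)}) -> Sec(T B).  (Laws omitted: we prove non-existence
   of even the bare operation, which is stronger.) *)
Definition DKEop (M : Type) (one : M) : Type :=
  forall (G : Type) (A : Fam G) (B : Fam (compr (Tfam M A))),
    Sec (Tfam M (reindex (@pmap G A (Tfam M A) (@eta M one G A)) B)) -> Sec (Tfam M B).

Definition Gam1 : Type := unit.
Definition A1 : Fam Gam1 := fun _ => unit.

Definition Bw (M : Type) (one : M) : Fam (compr (Tfam M A1)) :=
  fun p => {u : unit | snd (projT2 p) = one}.


Unset Implicit Arguments.

(* Reindexed along the unit, B only sees fibres with m = 1_M, which are
   inhabited; over Gamma.TA the fibre at any m <> 1_M is empty.  A dependent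
   Kleisli extension would turn a section of the former into one of the
   latter. *)

Section WriterFamilies.

Variables (M : Type) (one : M).

Definition Bw_eta : Fam (compr A1) :=
  reindex (@pmap Gam1 A1 (Tfam M A1) (@eta M one Gam1 A1)) (@Bw M one).

Lemma Bw_eta_sec : Sec (Tfam M Bw_eta).
Proof. intros p; exact (exist _ tt eq_refl, one). Qed.

Lemma Bw_no_sec : (exists m : M, m <> one) -> ~ inhabited (Sec (Tfam M (@Bw M one))).
Proof.
  intros [m Hm] [s].
  destruct (s (existT _ tt (tt, m))) as [[_ Hm_one] _].
  exact (Hm Hm_one).
Qed.

End WriterFamilies.

Lemma no_map_of_inhabited_to_empty (X Y : Type) : X -> ~ inhabited Y -> ~ inhabited (X -> Y).
Proof. intros x HY [f]; exact (HY (inhabits (f x))). Qed.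

Theorem mainTheorem5 (M : Type) (mul : M -> M -> M) (one : M)
  (mulA : forall x y z, mul x (mul y z) = mul (mul x y) z)
  (mul1m : forall x, mul one x = x)
  (mulm1 : forall x, mul x one = x)
  (nontriv : exists m : M, m <> one) :
  inhabited (Sec (Tfam M (reindex (@pmap Gam1 A1 (Tfam M A1) (@eta M one Gam1 A1)) (@Bw M one))))
  /\ ~ inhabited (Sec (@Tfam M _ (@Bw M one)))
  /\ ~ inhabited (Sec (Tfam M (reindex (@pmap Gam1 A1 (Tfam M A1) (@eta M one Gam1 A1)) (@Bw M one)))
                  -> Sec (@Tfam M _ (@Bw M one)))
  /\ ~ inhabited (@DKEop M one).
Proof.
  pose proof (Bw_eta_sec M one) as src.
  pose proof (Bw_no_sec M one nontriv) as no_tgt.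
  split; [exact (inhabits src) |].
  split; [exact no_tgt |].
  split; [exact (no_map_of_inhabited_to_empty _ _ src no_tgt) |].
  intros [dke]; exact (no_tgt (inhabits (dke Gam1 A1 (@Bw M one) src))).
Qed.
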